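(* Let $\alpha>0$ be fixed. There is a constant $C>0$ (depending only on $\alpha$) such that the following holds. Let $\mathcal{R}=\{P_1,\dots,P_n\}$ be a set of $n$ pairwise disjoint, connected, $\alpha$-fat simple polygons in the plane, let $0<\varepsilon<1$, let $T^*$ be an optimal tour of $\mathcal{R}$ with length $L^*$, let $W_0$ be the axis-aligned bounding box of $T^*$, let $\mathcal{R}_{W_0}\subseteq\mathcal{R}$ be the set of regions lying entirely inside $W_0$, and let $\lambda(\mathcal{R}_{W_0})$ be the sum of the diameters of the regions in $\mathcal{R}_{W_0}$. Then $L^*\ge C\cdot \lambda(\mathcal{R}_{W_0})/\log(n/\varepsilon)$.
   Context: A region $P$ is $\alpha$-fat if $\mathrm{area}(P)\ge \alpha\,[\mathrm{diam}(P)]^2$. A tour of $\mathcal{R}$ is a closed curve in the plane that intersects every region; an optimal tour is one of minimum Euclidean length. *)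

From HB Require Import structures.
From mathcomp Require Import all_boot all_order all_algebra.
From mathcomp Require Import all_classical all_reals all_analysis.
Set Implicit Arguments. Unset Strict Implicit. Unset Printing Implicit Defensive.
Import Order.TTheory GRing.Theory Num.Theory.
Import numFieldNormedType.Exports.
Local Open Scope classical_set_scope.
Local Open Scope ring_scope.

Section Plane.
Variable R : realType.
Definition pt := (R * R)%type.

Definition edist (p q : pt) : R :=
  Num.sqrt ((p.1 - q.1) ^+ 2 + (p.2 - q.2) ^+ 2).

Definition diam (P : set pt) : R :=
  sup [set edist p q | p in P & q in P].

Definition area (P : set pt) : \bar R :=
  ((@lebesgue_measure R) \x (@lebesgue_measure R))%E P.

Definition fat (alpha : R) (P : set pt) : Prop :=
  ((alpha * diam P ^+ 2)%:E <= area P)%E.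

Definition segment (a b : pt) : set pt :=
  [set ((1 - t) * a.1 + t * b.1, (1 - t) * a.2 + t * b.2) | t in `[0, 1]].

Definition vtx (v : seq pt) (i : nat) : pt := nth (0, 0) v (i %% size v)%N.
Definition edge (v : seq pt) (i : nat) : set pt :=
  segment (vtx v i) (vtx v i.+1).

Definition simple_chain (v : seq pt) : Prop :=
  (3 <= size v)%N /\ uniq v /\
  forall i j : nat, (i < size v)%N -> (j < size v)%N -> i <> j ->
    (if (j == (i.+1 %% size v)%N) then edge v i `&` edge v j = [set vtx v j]
     else if (i == (j.+1 %% size v)%N) then edge v i `&` edge v j = [set vtx v i]
     else edge v i `&` edge v j = set0).

Definition chain_image (v : seq pt) : set pt :=
  \bigcup_(i in [set i | (i < size v)%N]) edge v i.

Definition simple_polygon (P : set pt) : Prop :=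
  compact P /\ closure (interior P) = P /\
  exists v : seq pt, simple_chain v /\
    closure P `\` interior P = chain_image v.

Definition closed_curve (g : R -> pt) : Prop :=
  {within `[0, 1], continuous g} /\ g 0 = g 1.

Definition curve_image (g : R -> pt) : set pt := g @` `[0, 1].

(* Euclidean length: supremum of inscribed polygonal lengths over
   partitions 0 = t_0 <= t_1 <= ... <= t_k = 1 *)
Definition polyline_len (g : R -> pt) (s : seq R) : R :=
  \sum_(i < size s) edist (g (nth 0 (0 :: s) i)) (g (nth 0 s i)).

Definition curve_length (g : R -> pt) : \bar R :=
  ereal_sup [set (polyline_len g s)%:E | s in
     [set s : seq R | path <=%O (0 : R) s /\ last 0 s = 1]].

Definition is_tour (n : nat) (P : 'I_n -> set pt) (g : R -> pt) : Prop :=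
  closed_curve g /\ forall i, curve_image g `&` P i !=set0.

Definition optimal_tour (n : nat) (P : 'I_n -> set pt) (g : R -> pt) : Prop :=
  is_tour P g /\ forall g', is_tour P g' -> (curve_length g <= curve_length g')%E.

Definition bbox (g : R -> pt) : set pt :=
  [set p : pt |
     inf [set (g t).1 | t in `[0, 1]] <= p.1 <= sup [set (g t).1 | t in `[0, 1]] /\
     inf [set (g t).2 | t in `[0, 1]] <= p.2 <= sup [set (g t).2 | t in `[0, 1]]].

Definition lambda_in (n : nat) (P : 'I_n -> set pt) (W : set pt) : R :=
  \sum_(i < n | `[< P i `<=` W >]) diam (P i).

End Plane.

From Pilot Require Import Defs.
From HB Require Import structures.
From mathcomp Require Import all_boot all_order all_algebra.
From mathcomp Require Import all_classical all_reals all_analysis.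
Import Order.TTheory GRing.Theory Num.Theory.
Import numFieldNormedType.Exports.
Local Open Scope classical_set_scope.
Local Open Scope ring_scope.
From mathcomp Require Import ring lra.
(* Imported again so that [edist] denotes the Euclidean distance of [Defs]
   rather than the extended distance of mathcomp-analysis. *)
Import Defs.

Set Implicit Arguments.
Unset Strict Implicit.
Unset Printing Implicit Defensive.

(* Let L be the length of T. The bounding box of T has sides at most L, so
   every region inside it has diameter at most 2L. Sort these regions into
   the dyadic classes (d, 2d] with d = L / 2^k, k < K, where 2^K >= n; the
   regions below all classes have total diameter at most n 2L / 2^K <= 2L.
   A region of a class meets T, and T has a d-net of at most L/d + 1 points,
   so the region lies in the square of side 6d around a net point. As the
   regions are disjoint and fat, comparing areas gives
   alpha d (sum of their diameters) <= 36 d^2 (L/d + 1), so each class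
   contributes O(L / alpha). With K = O(log n) classes,
   lambda = O(L log (n / eps) / alpha). *)

Section EuclideanDistance.
Variable R : realType.
Implicit Types p q : pt R.

Lemma edist_ge0 p q : 0 <= edist p q.
Proof. exact: sqrtr_ge0. Qed.

Lemma edistC p q : edist p q = edist q p.
Proof. by rewrite /edist -sqrrN opprB -(sqrrN (p.2 - q.2)) opprB. Qed.

Lemma edistxx p : edist p p = 0.
Proof. by rewrite /edist !subrr expr0n /= addr0 sqrtr0. Qed.

Lemma normB1_le_edist p q : `|p.1 - q.1| <= edist p q.
Proof.
rewrite /edist -(sqrtr_sqr (p.1 - q.1)) ler_sqrt ?addr_ge0 ?sqr_ge0 //.
by rewrite lerDl sqr_ge0.
Qed.

Lemma normB2_le_edist p q : `|p.2 - q.2| <= edist p q.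
Proof.
rewrite /edist -(sqrtr_sqr (p.2 - q.2)) ler_sqrt ?addr_ge0 ?sqr_ge0 //.
by rewrite lerDr sqr_ge0.
Qed.

Lemma edist_le_normB p q : edist p q <= `|p.1 - q.1| + `|p.2 - q.2|.
Proof.
have := normr_ge0 (p.1 - q.1); have := normr_ge0 (p.2 - q.2).
rewrite /edist -(real_normK (num_real (p.1 - q.1))).
rewrite -(real_normK (num_real (p.2 - q.2))) => ? ?.
by rewrite -[leRHS]ger0_norm ?addr_ge0 // -[leRHS]sqrtr_sqr ler_sqrt; nra.
Qed.

End EuclideanDistance.

Section Diameter.
Variable R : realType.
Implicit Types (A : set (pt R)) (p q : pt R).

Lemma compact_edist_bounded A : compact A ->
  exists B, forall p q, A p -> A q -> edist p q <= B.
Proof.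
move=> /compact_bounded[N [_ /(_ (`|N| + 1)) AN]].
have {AN}AN p : A p -> `|p.1| <= `|N| + 1 /\ `|p.2| <= `|N| + 1.
  move=> Ap; have := AN ltac:(by rewrite (le_lt_trans (ler_norm N)) ?ltrDl) p Ap.
  rewrite /= [X in X <= _ -> _](_ : _ = Num.max `|p.1| `|p.2|) //.
  by rewrite ge_max => /andP.
exists (4 * (`|N| + 1)) => p q Ap Aq; apply: le_trans (edist_le_normB p q) _.
have [? ?] := AN p Ap; have [? ?] := AN q Aq.
have := ler_normB p.1 q.1; have := ler_normB p.2 q.2; lra.
Qed.

Lemma diam_ge0 A : 0 <= diam A.
Proof.
rewrite /diam; set D := [set edist p q | p in A & q in A].
have [supD|/sup_out->//] := pselect (has_sup D).
have [_ [p Ap [q Aq _]]] := supD.1; apply: le_trans (edist_ge0 p q) _.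
by apply: sup_upper_bound => //; exists p => //; exists q.
Qed.

Lemma edist_le_diam A p q : compact A -> A p -> A q -> edist p q <= diam A.
Proof.
move=> /compact_edist_bounded[B AB] Ap Aq; apply: sup_upper_bound.
  split; first by exists (edist p q); exists p => //; exists q.
  by exists B => _ [p' Ap' [q' Aq' <-]]; exact: AB.
by exists p => //; exists q.
Qed.

Lemma diam_le A c : 0 <= c ->
  (forall p q, A p -> A q -> edist p q <= c) -> diam A <= c.
Proof.
move=> c_ge0 Ac; rewrite /diam.
have [->|ne] := eqVneq [set edist p q | p in A & q in A] set0.
  by rewrite sup0.
by apply: ge_sup; [exact/set0P | move=> _ [p Ap [q Aq <-]]; exact: Ac].
Qed.

End Diameter.

Section CurveLength.
Variables (R : realType) (g : R -> pt R).

Fixpoint chord_sum (a : R) (s : seq R) : R :=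
  if s is x :: s' then edist (g a) (g x) + chord_sum x s' else 0.

Lemma polyline_lenE s : polyline_len g s = chord_sum 0 s.
Proof.
suff chordE a : \sum_(i < size s) edist (g (nth 0 (a :: s) i)) (g (nth 0 s i))
    = chord_sum a s by exact: chordE.
elim: s a => [|x s IHs] a /=; first by rewrite big_ord0.
by rewrite big_ord_recl /= IHs.
Qed.

Lemma chord_sum_rcons a s b :
  chord_sum a (rcons s b) = chord_sum a s + edist (g (last a s)) (g b).
Proof. by elim: s a => [|x s IHs] a /=; rewrite ?IHs ?addr0 ?add0r ?addrA. Qed.

Lemma chord_sum_ge_sep r a s : path (fun x y => r <= edist (g x) (g y)) a s ->
  (size s)%:R * r <= chord_sum a s.
Proof.
elim: s a => [|x s IHs] a /=; first by rewrite mul0r.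
by move=> /andP[rax /IHs]; rewrite mulrSr mulrDl mul1r addrC; apply: lerD.
Qed.

Lemma polyline_len_le s : path <=%O 0 s -> last 0 s = 1 ->
  ((polyline_len g s)%:E <= curve_length g)%E.
Proof. by move=> s_sorted s_last; apply: ereal_sup_ubound; exists s. Qed.

Lemma edist_le_curve_length u v : 0 <= u <= 1 -> 0 <= v <= 1 ->
  ((edist (g u) (g v))%:E <= curve_length g)%E.
Proof.
wlog uv : u v / u <= v.
  move=> gen u01 v01; have [uv|/ltW vu] := lerP u v; first exact: gen uv u01 v01.
  by rewrite edistC; exact: gen vu v01 u01.
move=> /andP[u_ge0 u_le1] /andP[v_ge0 v_le1].
apply: le_trans (polyline_len_le (s := [:: u; v; 1]) _ _) => //=;
  last by rewrite u_ge0 uv v_le1.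
rewrite lee_fin polyline_lenE /= addr0.
have := edist_ge0 (g 0) (g u); have := edist_ge0 (g v) (g 1); lra.
Qed.

Lemma curve_length_ge0 : (0 <= curve_length g)%E.
Proof.
have := @edist_le_curve_length 0 0; rewrite edistxx lexx ler01; exact.
Qed.

End CurveLength.

Section CurveNet.
Variables (R : realType) (g : R -> pt R) (L r : R).
Hypotheses (gL : curve_length g = L%:E) (r_gt0 : 0 < r).

Definition separated (S : seq R) :=
  [/\ uniq S, {in S, forall s, 0 <= s <= 1}
    & {in S &, forall a b, a != b -> r <= edist (g a) (g b)}].

Lemma separated_path S x s :
  separated S -> uniq (x :: s) -> {subset x :: s <= S} ->
  path (fun a b => r <= edist (g a) (g b)) x s.
Proof.
case=> _ _ sepS; elim: s x => [|y s IHs] x //= /andP[xys ys] sub.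
apply/andP; split; last by apply: IHs => // z zs; apply: sub; rewrite inE zs orbT.
apply: sepS; rewrite ?sub ?inE ?eqxx ?orbT //.
by apply: contraNneq xys => ->; rewrite inE eqxx.
Qed.

Lemma separated_size_le S : separated S -> ((size S)%:R - 1) * r <= L.
Proof.
(* Sorted and closed by 1, S is a partition of [0, 1] whose inner chords all
   have length at least r. *)
move=> sepS; have L_ge0 : 0 <= L by rewrite -lee_fin -gL curve_length_ge0.
case: (sepS) => uS S01 _.
case sortS : (sort <=%R S) => [|x s].
  move: sortS => /(congr1 size); rewrite size_sort => -> /=.
  by have := r_gt0; lra.
have sizeS : size S = (size s).+1 by rewrite -(size_sort <=%R S) sortS.
have memS z : z \in x :: s -> z \in S by rewrite -sortS mem_sort.
have part : path <=%R 0 (rcons (x :: s) 1).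
  rewrite -sortS rcons_path (path_sortedE le_trans) (sort_sorted le_total) andbT.
  apply/andP; split; first by apply/allP => z; rewrite mem_sort => /S01/andP[].
  have : last 0 (sort <=%R S) \in 0 :: sort <=%R S by exact: mem_last.
  by rewrite inE mem_sort => /orP[/eqP->|/S01/andP[]].
have := polyline_len_le g part (last_rcons _ _ _).
rewrite gL lee_fin polyline_lenE chord_sum_rcons /= sizeS.
have := chord_sum_ge_sep (separated_path sepS _ memS);
  rewrite -sortS sort_uniq => /(_ uS).
have := edist_ge0 (g 0) (g x); have := edist_ge0 (g (last x s)) (g 1).
rewrite -addn1 natrD; lra.
Qed.

Lemma curve_net : exists S : seq (pt R), ((size S)%:R - 1) * r <= L /\
  forall t, 0 <= t <= 1 -> exists2 c, c \in S & edist (g t) c < r.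
Proof.
pose has_sep k := `[< exists S, size S = k /\ separated S >].
have has_sep0 : exists k, has_sep k.
  by exists 0%N; apply/asboolP; exists [::]; split => //; split.
have has_sep_le k : has_sep k -> (k <= (Num.truncn (L / r)).+1)%N.
  move=> /asboolP[S [<- /separated_size_le sizeS]].
  have : (size S)%:R - 1 <= L / r by rewrite ler_pdivlMr.
  have := truncnS_gt (L / r); rewrite -ltnS -(ltr_nat R) -addn1 natrD; lra.
(* A separated set of maximal size is an r-net of the curve. *)
have [k /asboolP[S [sizeS sepS]] k_max] := ex_maxnP has_sep0 has_sep_le.
exists (map g S); split; first by rewrite size_map; exact: separated_size_le.
move=> t t01; apply: contrapT => tfar.
have far s : s \in S -> r <= edist (g t) (g s).
  move=> sS; rewrite leNgt; apply/negP => ?.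
  by apply: tfar; exists (g s) => //; exact: map_f.
have tS : t \notin S.
  by apply/negP => /far; rewrite edistxx leNgt r_gt0.
suff /k_max : has_sep k.+1 by rewrite ltnn.
apply/asboolP; exists (t :: S); split; first by rewrite /= sizeS.
case: sepS => uS S01 sepS; split; first by rewrite /= tS uS.
  by move=> s; rewrite inE => /orP[/eqP->|/S01].
move=> a b; rewrite !inE => /orP[/eqP->|aS] /orP[/eqP->|bS] ab.
- by rewrite eqxx in ab.
- exact: far.
- by rewrite edistC; apply: far.
- exact: sepS.
Qed.

End CurveNet.

Section BoundingBox.
Variable R : realType.

Lemma inf_sup_normB_le (f : R -> R) c x y :
  (forall u v, 0 <= u <= 1 -> 0 <= v <= 1 -> `|f u - f v| <= c) ->
  inf [set f t | t in `[0, 1]] <= x <= sup [set f t | t in `[0, 1]] ->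
  inf [set f t | t in `[0, 1]] <= y <= sup [set f t | t in `[0, 1]] ->
  `|x - y| <= c.
Proof.
move=> fc /andP[x_ge x_le] /andP[y_ge y_le].
set F := [set f t | t in `[0, 1]] in x_ge x_le y_ge y_le.
have F0 : F !=set0 by exists (f 0), 0 => //=; rewrite in_itv /= lexx ler01.
have : sup F <= inf F + c.
  apply: ge_sup => // _ [u u01 <-]; rewrite -lerBlDr.
  apply: lb_le_inf => // _ [v v01 <-]; move: u01 v01; rewrite /= !in_itv /=.
  by move=> /fc/[apply]; rewrite ler_norml => /andP[_]; lra.
rewrite ler_norml; lra.
Qed.

Variables (g : R -> pt R) (L : R).
Hypothesis gL : curve_length g = L%:E.

Lemma bbox_normB_le p q : bbox g p -> bbox g q ->
  `|p.1 - q.1| <= L /\ `|p.2 - q.2| <= L.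
Proof.
have gL' u v : 0 <= u <= 1 -> 0 <= v <= 1 -> edist (g u) (g v) <= L.
  by move=> u01 v01; rewrite -lee_fin -gL edist_le_curve_length.
move=> [p1 p2] [q1 q2]; split.
  apply: (inf_sup_normB_le (f := fun t => (g t).1)) => // u v u01 v01.
  exact: le_trans (normB1_le_edist _ _) (gL' u v u01 v01).
apply: (inf_sup_normB_le (f := fun t => (g t).2)) => // u v u01 v01.
exact: le_trans (normB2_le_edist _ _) (gL' u v u01 v01).
Qed.

Lemma diam_le_bbox (A : set (pt R)) : A `<=` bbox g -> diam A <= 2 * L.
Proof.
move=> Ag; have L_ge0 : 0 <= L by rewrite -lee_fin -gL curve_length_ge0.
apply: diam_le => [|p q Ap Aq]; first lra.
have [? ?] := bbox_normB_le (Ag _ Ap) (Ag _ Aq); have := edist_le_normB p q; lra.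
Qed.

Lemma lambda_in_bbox_eq0 n (P : 'I_n -> set (pt R)) :
  L <= 0 -> lambda_in P (bbox g) = 0.
Proof.
move=> L_le0; apply/le_anti; rewrite sumr_ge0 ?andbT => [|i _]; last first.
  exact: diam_ge0.
by apply: sumr_le0 => i /asboolP/diam_le_bbox; lra.
Qed.

End BoundingBox.

Section DisjointMeasure.
Context d (T : measurableType d) (R : realType).
Variable mu : {measure set T -> \bar R}.
Variables (n : nat) (F : 'I_n -> set T).
Hypotheses (F_meas : forall i, measurable (F i))
  (F_disj : forall i j, i != j -> F i `&` F j = set0).

Lemma sum_measure_le_disjoint (J : {pred 'I_n}) (B : set T) :
  measurable B -> (forall i, J i -> F i `<=` B) ->
  (\sum_(i < n | J i) mu (F i) <= mu B)%E.
Proof.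
move=> mB FB.
have Ftriv : trivIset J F.
  move=> i j _ _ [p Fijp]; apply/eqP/negPn/negP => /F_disj Fij.
  by move: Fijp; rewrite Fij.
rewrite -(measure_bigsetU_ord_cond mu (fun i _ => F_meas i) Ftriv).
apply: le_measure; rewrite ?inE //; first exact: bigsetU_measurable.
elim/big_rec: _ => [|i A Ji AB]; first exact: sub0set.
by rewrite subUset; split; first exact: FB.
Qed.

Lemma sum_measure_le_cover (J : {pred 'I_n}) (I : eqType) (S : seq I)
    (B : I -> set T) :
  (forall s, measurable (B s)) ->
  (forall i, J i -> exists2 s, s \in S & F i `<=` B s) ->
  (\sum_(i < n | J i) mu (F i) <= \sum_(s <- S) mu (B s))%E.
Proof.
move=> mB FB.
apply: le_trans (_ : \sum_(i < n | J i)
  \sum_(s <- S | `[< F i `<=` B s >]) mu (F i) <= _)%E.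
  apply: lee_sum => i Ji; have [s sS FBs] := FB i Ji.
  rewrite (big_rem s) //= asboolT // leeDl //.
  by apply: sume_ge0 => ? _; exact: measure_ge0.
rewrite (exchange_big_dep xpredT) //=; apply: lee_sum => s _.
by apply: sum_measure_le_disjoint => // i /andP[_ /asboolP].
Qed.

End DisjointMeasure.

Section PlaneArea.
Variable R : realType.
Implicit Types (A U : set (pt R)) (c p : pt R).

Lemma open_measurable_plane U : open U -> measurable U.
Proof.
move=> oU.
pose box (q : (rat * rat) * (rat * rat)) : set (pt R) :=
  `[ratr q.1.1, ratr q.1.2] `*` `[ratr q.2.1, ratr q.2.2].
suff -> : U = \bigcup_(q in [set q | box q `<=` U]) box q.
  rewrite bigcup_mkcond; apply: countable_bigcupT_measurable.
    exact: countableP.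
  by move=> q; case: ifP => _; [exact: measurableX | exact: measurable0].
apply/seteqP; split => [p Up|p [q /= qU /qU] //].
have /nbhs_ballP[r /= r_gt0 rU] : nbhs p U by move: oU; rewrite openE; exact.
have [a] := @rat_in_itvoo R (p.1 - r) p.1 ltac:(by rewrite gtrBl).
rewrite in_itv /= => /andP[a1 a2].
have [b] := @rat_in_itvoo R p.1 (p.1 + r) ltac:(by rewrite ltrDl).
rewrite in_itv /= => /andP[b1 b2].
have [c] := @rat_in_itvoo R (p.2 - r) p.2 ltac:(by rewrite gtrBl).
rewrite in_itv /= => /andP[c1 c2].
have [e] := @rat_in_itvoo R p.2 (p.2 + r) ltac:(by rewrite ltrDl).
rewrite in_itv /= => /andP[e1 e2].
exists ((a, b), (c, e)); last by rewrite /box /= !in_itv /= !ltW.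
move=> x [/=]; rewrite !in_itv /= => /andP[? ?] /andP[? ?]; apply: rU.
by split; rewrite /ball /= ltr_distlC; apply/andP; split; lra.
Qed.

Lemma compact_measurable_plane A : compact A -> measurable A.
Proof.
move=> cA; have clA : closed A by apply: compact_closed cA; exact: norm_hausdorff.
rewrite -[A]setCK; apply: measurableC; apply: open_measurable_plane.
exact: closed_openC.
Qed.

Definition square c (h : R) : set (pt R) :=
  `[c.1 - h, c.1 + h] `*` `[c.2 - h, c.2 + h].

Lemma square_measurable c h : measurable (square c h).
Proof. exact: measurableX. Qed.

Lemma area_square c h : 0 < h -> area (square c h) = ((2 * h) ^+ 2)%:E.
Proof.
move=> h_gt0; rewrite /area /square product_measure1E //.
have side x : lebesgue_measure (`[x - h, x + h]%classic : set R) = (2 * h)%:E.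
  by rewrite lebesgue_measure_itv /= lte_fin ltrD2l gtrN //; congr (_%:E); ring.
transitivity (lebesgue_measure (`[(c.1 - h)%R, (c.1 + h)%R]%classic : set R) *
  lebesgue_measure (`[(c.2 - h)%R, (c.2 + h)%R]%classic : set R))%E; first by [].
by rewrite !side -EFinM expr2.
Qed.

Lemma fat_area_ge alpha A d : 0 <= alpha -> fat alpha A -> d <= diam A ->
  ((alpha * d * diam A)%:E <= area A)%E.
Proof.
move=> alpha_ge0 fatA dA; apply: le_trans fatA; rewrite lee_fin expr2 mulrA.
by rewrite ler_wpM2r ?diam_ge0 // ler_wpM2l.
Qed.

Lemma sub_square A p c d : compact A -> A p -> edist p c < d ->
  diam A <= 2 * d -> A `<=` square c (3 * d).
Proof.
move=> cA Ap pc dA q Aq; have qp := edist_le_diam cA Aq Ap.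
have := normB1_le_edist q p; have := normB1_le_edist p c.
have := normB2_le_edist q p; have := normB2_le_edist p c.
have := ler_normD (q.1 - p.1) (p.1 - c.1).
have := ler_normD (q.2 - p.2) (p.2 - c.2).
rewrite !addrA !subrK /square /= !in_itv /= => ? ? ? ? ? ?.
have := ler_norml (q.1 - c.1) (3 * d); have := ler_norml (q.2 - c.2) (3 * d).
split; apply/andP; split; lra.
Qed.

End PlaneArea.

Section DyadicLevels.
Variable R : realType.

Lemma le_dyadic_split (M x : R) K : 0 < M -> 0 <= x <= M ->
  x <= (if x <= M / 2 ^+ K then x else 0) +
       \sum_(k < K) (if M / 2 ^+ k.+1 < x <= M / 2 ^+ k then x else 0).
Proof.
move=> M_gt0 /andP[x_ge0 xM]; elim: K => [|K IHK].
  by rewrite big_ord0 expr0 divr1 xM addr0.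
rewrite big_ord_recr /= addrCA; apply: le_trans IHK _.
rewrite [leLHS]addrC lerD2l.
have : 0 < M / 2 ^+ K by rewrite divr_gt0 ?exprn_gt0.
rewrite exprSr invfM mulrA; set m := M / 2 ^+ K.
by case: (lerP x m); case: (lerP x (m / 2)); rewrite /= ?andbT ?andbF; lra.
Qed.

Lemma sum_le_dyadic (I : finType) (x : I -> R) (M : R) K : 0 < M ->
  (forall i, 0 <= x i <= M) ->
  \sum_i x i <= #|I|%:R * (M / 2 ^+ K) +
    \sum_(k < K) \sum_(i | M / 2 ^+ k.+1 < x i <= M / 2 ^+ k) x i.
Proof.
move=> M_gt0 xM.
apply: le_trans (ler_sum _ (fun i _ => le_dyadic_split K M_gt0 (xM i))) _.
rewrite big_split /= exchange_big /=; apply: lerD.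
  apply: le_trans (ler_sum (G := fun=> M / 2 ^+ K) _ _) _.
    by move=> i _; case: ifP => // _; rewrite divr_ge0 ?exprn_ge0 ?ltW.
  by rewrite sumr_const mulr_natl.
by apply: ler_sum => k _; rewrite [leRHS]big_mkcond.
Qed.

End DyadicLevels.

Lemma trunc_log_ln_le (R : realType) (n : nat) (eps : R) : (1 < n)%N ->
  0 < eps <= 1 -> (trunc_log 2 n).+1%:R * ln 2 <= 2 * ln (n%:R / eps).
Proof.
move=> n_gt1 /andP[eps_gt0 eps_le1].
have n_gt0 : 0 < n%:R :> R by rewrite ltr0n ltnW.
have ln_le x y : 0 < x -> x <= y -> ln x <= ln y.
  by move=> x_gt0 xy; rewrite ler_ln ?posrE // (lt_le_trans x_gt0 xy).
have : ln (2 : R) <= ln n%:R by apply: ln_le; rewrite ?ler_nat.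
have : ln n%:R <= ln (n%:R / eps).
  by apply: ln_le; rewrite // ler_pdivlMr // ger_pMr.
have : ln ((2 : R) ^+ (trunc_log 2 n).+1) <= ln (2 * n%:R).
  apply: ln_le; rewrite ?exprn_gt0 // -natrX -natrM ler_nat expnS leq_mul2l /=.
  by rewrite trunc_logP // ltnW.
rewrite lnXn // lnM ?posrE // -mulr_natl; lra.
Qed.

Section FatPacking.
Variables (R : realType) (alpha : R) (n : nat) (P : 'I_n -> set (pt R)).
Hypotheses (alpha_ge0 : 0 <= alpha) (P_compact : forall i, compact (P i))
  (P_fat : forall i, fat alpha (P i))
  (P_disj : forall i j, i != j -> P i `&` P j = set0).

Lemma sum_diam_le_squares (S : seq (pt R)) (J : pred 'I_n) d h : 0 < h ->
  (forall i, J i -> d <= diam (P i)) ->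
  (forall i, J i -> exists2 c, c \in S & P i `<=` square c h) ->
  alpha * d * \sum_(i | J i) diam (P i) <= (size S)%:R * (2 * h) ^+ 2.
Proof.
move=> h_gt0 Jd JS; rewrite mulr_sumr -lee_fin -sumEFin.
apply: le_trans (_ : \sum_(i | J i) area (P i) <= _)%E.
  by apply: lee_sum => i Ji; apply: fat_area_ge => //; exact: Jd.
have Pm i : measurable (P i) by apply: compact_measurable_plane; exact: P_compact.
have := sum_measure_le_cover (lebesgue_measure \x lebesgue_measure)%E Pm P_disj
  (fun c => square_measurable c h) JS => /le_trans; apply.
have -> : \sum_(c <- S) (lebesgue_measure \x lebesgue_measure)%E (square c h)
    = \sum_(c <- S) ((2 * h) ^+ 2)%:E.
  by apply: eq_bigr => c _; exact: area_square.
rewrite sumEFin lee_fin big_const_seq count_predT iter_addr_0.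
by rewrite [leRHS]mulr_natl.
Qed.

Variables (g : R -> pt R) (L : R).
Hypotheses (P_meet : forall i, exists2 t, 0 <= t <= 1 & P i (g t))
  (gL : curve_length g = L%:E).

Lemma sum_diam_level (J : pred 'I_n) d : 0 < d <= L ->
  (forall i, J i -> d < diam (P i) <= 2 * d) ->
  alpha * \sum_(i | J i) diam (P i) <= 72 * L.
Proof.
move=> /andP[d_gt0 dL] Jd; have [S [sizeS S_net]] := curve_net gL d_gt0.
have JS i : J i -> exists2 c, c \in S & P i `<=` square c (3 * d).
  move=> Ji; have [t t01 Pit] := P_meet i; have [c cS tc] := S_net t t01.
  by exists c => //; apply: sub_square Pit tc _; case/andP: (Jd i Ji).
have Jd' i : J i -> d <= diam (P i) by move=> /Jd/andP[/ltW].
have := sum_diam_le_squares (mulr_gt0 _ d_gt0) Jd' JS.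
rewrite (_ : (2 * (3 * d)) ^+ 2 = 36 * d ^+ 2) //; last by ring.
set X := \sum_(i | J i) diam (P i) => sumX.
rewrite -(ler_pM2l d_gt0); nra.
Qed.

Lemma lambda_in_bbox_le K : 0 < L -> (n <= 2 ^ K)%N ->
  alpha * lambda_in P (bbox g) <= 2 * alpha * L + K%:R * (72 * L).
Proof.
move=> L_gt0 nK; have M_gt0 : 0 < 2 * L by rewrite mulr_gt0.
pose x i := if `[< P i `<=` bbox g >] then diam (P i) else 0.
have x_bd i : 0 <= x i <= 2 * L.
  rewrite /x; case: asboolP => [/(diam_le_bbox gL) ->|_].
    by rewrite diam_ge0.
  by rewrite lexx ltW.
have -> : lambda_in P (bbox g) = \sum_i x i by rewrite /lambda_in big_mkcond.
have level k :
    alpha * \sum_(i | 2 * L / 2 ^+ k.+1 < x i <= 2 * L / 2 ^+ k) x i <= 72 * L.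
  have pow_gt0 : 0 < 2 ^+ k :> R by rewrite exprn_gt0.
  set d := 2 * L / 2 ^+ k.+1.
  have dE : d = L / 2 ^+ k by rewrite /d exprS; field; rewrite gt_eqF.
  have d_gt0 : 0 < d by rewrite dE divr_gt0.
  have dL : d <= L.
    have : 1 <= 2 ^+ k :> R by apply: exprn_ege1; rewrite ler1n.
    by rewrite dE ler_pdivrMr //; nra.
  have -> : 2 * L / 2 ^+ k = 2 * d by rewrite dE mulrA.
  have xE i : d < x i -> x i = diam (P i).
    by rewrite /x; case: asboolP => // _; rewrite ltNge ltW.
  rewrite (eq_bigr (fun i => diam (P i))) => [|i /andP[/xE //]].
  apply: (sum_diam_level (d := d)) => [|i /andP[dx x2d]]; first exact/andP.
  by rewrite -xE // dx x2d.
apply: le_trans (ler_wpM2l alpha_ge0 (sum_le_dyadic K M_gt0 x_bd)) _.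
have small : n%:R * (2 * L / 2 ^+ K) <= 2 * L.
  rewrite mulrA ler_pdivrMr ?exprn_gt0 // [leLHS]mulrC ler_pM2l //.
  by rewrite -natrX ler_nat.
rewrite card_ord mulrDr; apply: lerD.
  by rewrite (mulrC 2 alpha) -[leRHS]mulrA; apply: ler_wpM2l.
rewrite mulr_sumr; apply: (@le_trans _ _ (\sum_(k < K) 72 * L)).
  by apply: ler_sum => k _; exact: level.
by rewrite sumr_const card_ord (mulr_natl (72 * L) K).
Qed.

Lemma lambda_in_bbox_le_ln eps : 0 < L -> (1 < n)%N -> 0 < eps <= 1 ->
  alpha * ln 2 * lambda_in P (bbox g) <=
    (4 * alpha + 144) * L * ln (n%:R / eps).
Proof.
move=> L_gt0 n_gt1 eps01.
have ln2_gt0 : 0 < ln (2 : R) by rewrite ln_gt0 // ltr1n.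
have := lambda_in_bbox_le L_gt0 (ltnW (trunc_log_ltn n (ltnSn 1))).
have := trunc_log_ln_le n_gt1 eps01.
set K := (trunc_log 2 n).+1%:R; set l := ln (n%:R / eps) => logK lamK.
have LlogK := ler_wpM2l (ltW L_gt0) logK.
have := ler_wpM2l (ltW ln2_gt0) lamK; have := ler_wpM2l alpha_ge0 LlogK.
have : alpha * L * ln 2 <= alpha * L * (K * ln 2).
  by apply: ler_wpM2l; rewrite ?mulr_ge0 ?ler_pMl ?ler1n // ltW.
nra.
Qed.

End FatPacking.

Section Tours.
Variables (R : realType) (n : nat) (P : 'I_n -> set (pt R)).

Lemma tour_meets g :
  is_tour P g -> forall i, exists2 t, 0 <= t <= 1 & P i (g t).
Proof.
by move=> [_ gP] i; have [_ [[t t01 <-] Pit]] := gP i; exists t; rewrite -?in_itv.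
Qed.

Lemma curve_length_cst (p : pt R) : (curve_length (fun=> p) <= 0)%E.
Proof.
apply: ge_ereal_sup => _ [s _ <-]; rewrite lee_fin /polyline_len big1 // => i _.
exact: edistxx.
Qed.

Lemma optimal_tour_length_le0 T : (n <= 1)%N -> optimal_tour P T ->
  (curve_length T <= 0)%E.
Proof.
move=> n_le1 [T_tour T_min].
have [p Pp] : exists p, forall i, P i p.
  have [n0|n_gt0] := posnP n.
    by exists (0, 0) => i; have := leq_trans (ltn_ord i) (eq_leq n0).
  have [t _ Pt] := tour_meets T_tour (Ordinal n_gt0); exists (T t) => i.
  rewrite (_ : i = Ordinal n_gt0) //; apply/val_inj/eqP.
  by rewrite /= -leqn0 -ltnS (leq_trans (ltn_ord i)).
apply: le_trans (T_min (fun=> p) _) (curve_length_cst p); split.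
  by split => //; apply: continuous_subspaceT; exact: cst_continuous.
by move=> i; exists p; split => //; exists 0 => //=; rewrite in_itv /= lexx ler01.
Qed.

End Tours.

Theorem lemma2p6 (R : realType) (alpha : R) (halpha : 0 < alpha) :
  exists C : R, 0 < C /\
  forall (n : nat) (P : 'I_n -> set (pt R)) (eps : R),
    (forall i, simple_polygon (P i)) ->
    (forall i, connected (P i)) ->
    (forall i, fat alpha (P i)) ->
    (forall i j, i != j -> P i `&` P j = set0) ->
    0 < eps < 1 ->
    forall T : R -> pt R, optimal_tour P T ->
      ((C * lambda_in P (bbox T) / ln (n%:R / eps))%:E <= curve_length T)%E.
Proof.
exists (alpha * ln 2 / (4 * alpha + 144)).
split; first by rewrite !divr_gt0 ?mulr_gt0 ?ln_gt0 ?ltr1n // addr_gt0 ?mulr_gt0.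
move=> n P eps P_polygon _ P_fat P_disj /andP[eps_gt0 eps_lt1] T T_opt.
have P_compact i : compact (P i) by case: (P_polygon i).
case TL : (curve_length T) => [L||]; last 2 first.
- by rewrite leey.
- by have := curve_length_ge0 T; rewrite TL.
rewrite lee_fin; have [L_le0|L_gt0] := lerP L 0.
  rewrite (lambda_in_bbox_eq0 TL P L_le0) mulr0 mul0r.
  by rewrite -lee_fin -TL curve_length_ge0.
have n_gt1 : (1 < n)%N.
  rewrite ltnNge; apply/negP => /optimal_tour_length_le0/(_ T_opt).
  by rewrite TL lee_fin leNgt L_gt0.
have l_gt0 : 0 < ln (n%:R / eps).
  by rewrite ln_gt0 // ltr_pdivlMr // mul1r (lt_le_trans eps_lt1) // ler1n ltnW.
rewrite ler_pdivrMr // mulrAC ler_pdivrMr ?addr_gt0 ?mulr_gt0 //.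
rewrite [leRHS]mulrC mulrA.
have := lambda_in_bbox_le_ln (ltW halpha) P_compact P_fat P_disj
  (tour_meets T_opt.1) TL L_gt0 n_gt1; apply.
by rewrite eps_gt0 ltW.
Qed.
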